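(* For any $0\le p\le n$, any $\eta,\mu\in\mathcal P(S_p)$ and any $f_n\in\mathrm{Osc}_1(S_n)$, there exist functions $\mathcal U_{p,n,\eta}(f_n),\mathcal V_{p,n,\eta}(f_n),\mathcal W_{p,n,\eta}(f_n)\in\mathrm{Osc}_1(S_p)$ whose values depend only on $(p,n,\eta)$ and $f_n$ (not on $\mu$), such that $$[\Phi_{p,n}(\mu)-\Phi_{p,n}(\eta)](f_n)=2q_{p,n}\beta(\mathcal P_{p,n})\,[\mu-\eta]\big(\mathcal U_{p,n,\eta}(f_n)\big)+\mathcal R_{p,n}(\mu,\eta)(f_n),$$ where $$|\mathcal R_{p,n}(\mu,\eta)(f_n)|\le 4q_{p,n}^3\beta(\mathcal P_{p,n})\,\big|[\mu-\eta](\mathcal V_{p,n,\eta}(f_n))\big|\,\big|[\mu-\eta](\mathcal W_{p,n,\eta}(f_n))\big|.$$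
   Context: Let $(S_n)_{n\ge0}$ be measurable spaces, $\mathcal M_n$ ($n\ge1$) Markov kernels from $S_{n-1}$ to $S_n$, and $\mathcal G_n:S_n\to(0,1)$ ($n\ge0$) measurable with $q_n:=\sup_{x,y}\mathcal G_n(x)/\mathcal G_n(y)<\infty$. Let $\mathcal Q_{p+1}(x,dy):=\mathcal G_p(x)\mathcal M_{p+1}(x,dy)$, $\mathcal Q_{p,n}:=\mathcal Q_{p+1}\mathcal Q_{p+2}\cdots\mathcal Q_n$ ($\mathcal Q_{n,n}=\mathrm{Id}$), $\mathcal P_{p,n}(f):=\mathcal Q_{p,n}(f)/\mathcal Q_{p,n}(1)$, and for $\mu\in\mathcal P(S_p)$, $\Phi_{p,n}(\mu)(f):=\mu(\mathcal Q_{p,n}f)/\mu(\mathcal Q_{p,n}1)$. Set $q_{p,n}:=\sup_{x,y\in S_p}\mathcal Q_{p,n}(1)(x)/\mathcal Q_{p,n}(1)(y)$ and $\beta(\mathcal P_{p,n}):=\sup_{f\in\mathrm{Osc}_1(S_n)}\mathrm{osc}(\mathcal P_{p,n}f)$, where $\mathrm{osc}(f)=\sup_{x,y}|f(x)-f(y)|$ and $\mathrm{Osc}_1(E)$ is the set of measurable functions on $E$ with oscillation at most $1$. *)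

From HB Require Import structures.
From mathcomp Require Import all_boot all_order all_algebra.
From mathcomp Require Import all_classical all_reals all_analysis.
Set Implicit Arguments. Unset Strict Implicit. Unset Printing Implicit Defensive.
Import Order.TTheory GRing.Theory Num.Theory.
Local Open Scope classical_set_scope.
Local Open Scope ring_scope.

Definition Osc1 (d : measure_display) (T : measurableType d) (R : realType)
  (f : T -> R) : Prop :=
  measurable_fun setT f /\ (forall x y, `|f x - f y| <= 1).

(* osc(f) = sup_{x,y} |f x - f y| (used only on bounded functions) *)
Definition osc (T : Type) (R : realType) (f : T -> R) : R :=
  sup [set r | exists x y, r = `|f x - f y|].

Definition mapp (d : measure_display) (T : measurableType d) (R : realType)
  (mu : {measure set T -> \bar R}) (f : T -> R) : R :=
  fine (\int[mu]_x (f x)%:E).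

(* Q_{m+1} f (x) = G_m(x) \int M_{m+1}(x,dy) f(y).
   Convention: M m is the Markov kernel from S m to S (m+1), i.e. M_{m+1}. *)
Definition Q1 (R : realType) (d : nat -> measure_display)
  (S : forall n, measurableType (d n)) (G : forall n, S n -> R)
  (M : forall n, R.-pker (S n) ~> (S n.+1)) (m : nat)
  (f : S m.+1 -> R) : S m -> R :=
  fun x => G m x * fine (\int[M m x]_y (f y)%:E).

Arguments Q1 {R d S} G M m f _.

(* Q_{p,k+p} = Q_{p+1} ... Q_{k+p}  (Q_{p,p} = Id) *)
Fixpoint Qpn (R : realType) (d : nat -> measure_display)
  (S : forall n, measurableType (d n)) (G : forall n, S n -> R)
  (M : forall n, R.-pker (S n) ~> (S n.+1)) (p k : nat) {struct k}
  : (S (k + p)%N -> R) -> S p -> R :=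
  match k return (S (k + p)%N -> R) -> S p -> R with
  | 0 => fun f => f
  | k'.+1 => fun f => @Qpn R d S G M p k' (@Q1 R d S G M (k' + p)%N f)
  end.
Arguments Qpn {R d S} G M p k f _.

Definition Ppn (R : realType) (d : nat -> measure_display)
  (S : forall n, measurableType (d n)) (G : forall n, S n -> R)
  (M : forall n, R.-pker (S n) ~> (S n.+1)) (p k : nat)
  (f : S (k + p)%N -> R) : S p -> R :=
  fun x => Qpn G M p k f x / Qpn G M p k (fun _ => 1) x.

Arguments Ppn {R d S} G M p k f _.

Definition Phi (R : realType) (d : nat -> measure_display)
  (S : forall n, measurableType (d n)) (G : forall n, S n -> R)
  (M : forall n, R.-pker (S n) ~> (S n.+1)) (p k : nat)
  (mu : probability (S p) R) (f : S (k + p)%N -> R) : R :=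
  mapp mu (Qpn G M p k f) / mapp mu (Qpn G M p k (fun _ => 1)).

Arguments Phi {R d S} G M p k mu f.

Definition qpn (R : realType) (d : nat -> measure_display)
  (S : forall n, measurableType (d n)) (G : forall n, S n -> R)
  (M : forall n, R.-pker (S n) ~> (S n.+1)) (p k : nat) : R :=
  sup [set r | exists x y,
        r = Qpn G M p k (fun _ => 1) x / Qpn G M p k (fun _ => 1) y].

Definition betaP (R : realType) (d : nat -> measure_display)
  (S : forall n, measurableType (d n)) (G : forall n, S n -> R)
  (M : forall n, R.-pker (S n) ~> (S n.+1)) (p k : nat) : R :=
  sup [set r | exists f : S (k + p)%N -> R, Osc1 f /\ r = osc (Ppn G M p k f)].
Arguments qpn {R d S} G M p k.
Arguments betaP {R d S} G M p k.

From HB Require Import structures.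
From mathcomp Require Import all_boot all_order all_algebra.
From mathcomp Require Import all_classical all_reals all_analysis.
From mathcomp Require Import ring lra measurable_realfun.
Import Order.TTheory GRing.Theory Num.Theory.
Local Open Scope classical_set_scope.
Local Open Scope ring_scope.
Set Implicit Arguments. Unset Strict Implicit. Unset Printing Implicit Defensive.

(* Put g := Q_{p,n}(1), h := Q_{p,n}(f), c := Phi_{p,n}(eta)(f) and
   phi := (h - c g) / eta(g), so that eta(phi) = 0.  An elementary identity for
   ratios gives, for every mu,
     Phi(mu)(f) - Phi(eta)(f) - mu(phi) = - mu(phi) (mu(g) - eta(g)) / mu(g).
   As c is a g-weighted eta-average of P_{p,n}(f) = h/g, |P_{p,n}(f) - c| <= beta;
   together with g <= q eta(g) this gives |phi| <= q beta.  Hence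
   U := phi / (2 q beta) has values in [-1/2, 1/2] and V := g / (q eta(g)) in
   [0, 1], mu(phi) = 2 q beta [mu - eta](U),
   mu(g) - eta(g) = q eta(g) [mu - eta](V),
   and eta(g) / mu(g) <= q bounds the remainder by
   2 q^3 beta |[mu - eta](U)| |[mu - eta](V)|; take W := U. *)

Definition bounded_measurable d (T : measurableType d) (R : realType)
  (f : T -> R) : Prop :=
  measurable_fun setT f /\ exists B : R, forall x, `|f x| <= B.

Section bounded_measurable.
Context d (T : measurableType d) (R : realType).
Implicit Types f g : T -> R.

Lemma bounded_measurable_cst (c : R) : bounded_measurable (fun _ : T => c).
Proof. by split; [exact: measurable_cst | exists `|c|]. Qed.

Lemma bounded_measurableB f g : bounded_measurable f -> bounded_measurable g ->
  bounded_measurable (fun x => f x - g x).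
Proof.
move=> [mf [B fB]] [mg [C gC]]; split; first exact: measurable_funB.
by exists (B + C) => x; apply: le_trans (ler_normB _ _) _; exact: lerD.
Qed.

Lemma bounded_measurableZ (c : R) f : bounded_measurable f ->
  bounded_measurable (fun x => c * f x).
Proof.
move=> [mf [B fB]]; split; first exact: measurable_funM.
by exists (`|c| * B) => x; rewrite normrM; exact: ler_wpM2l.
Qed.

Section mapp_probability.
Variable mu : {measure set T -> \bar R}.
Hypothesis mu1 : mu setT = 1%E.

Lemma bounded_measurable_integrable f : bounded_measurable f ->
  mu.-integrable setT (EFin \o f).
Proof.
move=> [mf [B fB]]; apply: measurable_bounded_integrable => //.
  by rewrite mu1 ltry.
exists B; split; first exact: num_real.
by move=> M BM x _; apply: le_trans (fB x) (ltW BM).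
Qed.

Lemma mappD f g : bounded_measurable f -> bounded_measurable g ->
  mapp mu (fun x => f x + g x) = mapp mu f + mapp mu g.
Proof.
move=> bf bg.
exact: RintegralD (bounded_measurable_integrable bf)
  (bounded_measurable_integrable bg).
Qed.

Lemma mappB f g : bounded_measurable f -> bounded_measurable g ->
  mapp mu (fun x => f x - g x) = mapp mu f - mapp mu g.
Proof.
move=> bf bg.
exact: RintegralB (bounded_measurable_integrable bf)
  (bounded_measurable_integrable bg).
Qed.

Lemma mappZ (c : R) f : bounded_measurable f ->
  mapp mu (fun x => c * f x) = c * mapp mu f.
Proof.
by move=> bf; apply: RintegralZl => //; exact: bounded_measurable_integrable.
Qed.

Lemma mapp_cst (c : R) : mapp mu (fun _ => c) = c.
Proof.
rewrite /mapp; have := Rintegral_cst mu (@measurableT _ T) c.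
by rewrite /Rintegral => ->; rewrite mu1 mulr1.
Qed.

Lemma ler_mapp f g : bounded_measurable f -> bounded_measurable g ->
  (forall x, f x <= g x) -> mapp mu f <= mapp mu g.
Proof.
move=> bf bg fg.
exact: le_Rintegral (bounded_measurable_integrable bf)
  (bounded_measurable_integrable bg) _.
Qed.

Lemma mapp_bounds f (a b : R) : bounded_measurable f ->
  (forall x, a <= f x <= b) -> a <= mapp mu f <= b.
Proof.
move=> bf fab; rewrite -[a]mapp_cst -[b]mapp_cst.
by apply/andP; split; apply: ler_mapp => //; try exact: bounded_measurable_cst;
  move=> x; have /andP[] := fab x.
Qed.

End mapp_probability.
End bounded_measurable.

Lemma measurable_mapp_kernel d d' (X : measurableType d) (Y : measurableType d')
  (R : realType) (M : R.-pker X ~> Y) (f : Y -> R) :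
  bounded_measurable f -> measurable_fun setT (fun x => mapp (M x) f).
Proof.
move=> bf; have [mf [B fB]] := bf.
have fB0 y : (0 <= (f y + B)%:E)%E.
  by rewrite lee_fin; move: (fB y); rewrite ler_norml; lra.
have -> : (fun x => mapp (M x) f) = (fun x => mapp (M x) (fun y => f y + B) - B).
  apply/funext => x; have M1 : M x setT = 1%E := prob_kernel x.
  by rewrite mappD ?mapp_cst ?addrK //; exact: bounded_measurable_cst.
apply: measurable_funB; last exact: measurable_cst.
apply: measurableT_comp (fine_measurable measurableT) _.
apply: measurable_fun_integral_kernel (measurable_kernel M) _ fB0 _.
by apply/measurable_EFinP; apply: measurable_funD => //; exact: measurable_cst.
Qed.

Lemma oscillation_le1_interval (T : Type) (R : realType) (f : T -> R) :
  (forall x y, `|f x - f y| <= 1) -> exists a, forall y, a <= f y <= a + 1.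
Proof.
move=> f1; have [[y0 _]|T0] := pselect (exists y : T, True); last first.
  by exists 0 => y; case: T0; exists y.
have fy0 z : f z <= f y0 + 1 by move: (f1 z y0); rewrite ler_norml; lra.
have ub : has_ubound (range f) by exists (f y0 + 1) => _ [z _ <-].
exists (sup (range f) - 1) => y; apply/andP; split.
  suff : sup (range f) <= f y + 1 by lra.
  apply: ge_sup; first by exists (f y0), y0.
  by move=> _ [z _ <-]; move: (f1 z y); rewrite ler_norml; lra.
suff : f y <= sup (range f) by lra.
by apply: ub_le_sup => //; exists y.
Qed.

Lemma interval_oscillation_le1 (T : Type) (R : realFieldType) (f : T -> R)
  (a : R) : (forall y, a <= f y <= a + 1) -> forall x y, `|f x - f y| <= 1.
Proof.
move=> fa x y; have /andP[? ?] := fa x; have /andP[? ?] := fa y.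
by rewrite ler_norml; apply/andP; split; lra.
Qed.

Lemma Osc1_bounded_measurable d (T : measurableType d) (R : realType)
  (f : T -> R) : Osc1 f -> bounded_measurable f.
Proof.
move=> [mf f1]; split => //; have [a fa] := oscillation_le1_interval f1.
exists (`|a| + 1) => y; have /andP[? ?] := fa y.
have := ler_norm a; have := ler_norm (- a); rewrite normrN => ? ?.
by rewrite ler_norml; apply/andP; split; lra.
Qed.

Lemma le_osc (T : Type) (R : realType) (f : T -> R) (B : R) :
  (forall x y, `|f x - f y| <= B) -> forall x y, `|f x - f y| <= osc f.
Proof.
move=> fB x y; apply: ub_le_sup; last by exists x, y.
by exists B => _ [x' [y' ->]].
Qed.

Lemma osc_le (T : Type) (R : realType) (f : T -> R) (B : R) (x0 : T) :
  (forall x y, `|f x - f y| <= B) -> osc f <= B.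
Proof.
move=> fB; apply: ge_sup; first by exists `|f x0 - f x0|, x0, x0.
by move=> _ [x [y ->]].
Qed.

Lemma probability_inhabited d (T : measurableType d) (R : realType)
  (mu : probability T R) : exists x : T, True.
Proof.
apply: contrapT => T0.
have : [set: T] = set0 by apply/seteqP; split => // x _; apply: T0; exists x.
move/(congr1 mu); rewrite probability_setT measure0 => -[] /eqP.
by rewrite oner_eq0.
Qed.

Lemma ratio_first_order_expansion (F : fieldType) (a b a' b' : F) :
  b != 0 -> b' != 0 ->
  a / b - a' / b' - (a - a' / b' * b) / b' =
  - ((a - a' / b' * b) / b') * (b - b') / b.
Proof. by move=> b0 b'0; field; apply/andP. Qed.

Section feynman_kac_semigroup.
Local Unset Implicit Arguments.
Context (R : realType) (d : nat -> measure_display)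
  (S : forall n, measurableType (d n))
  (G : forall n, S n -> R) (M : forall n, R.-pker (S n) ~> (S n.+1)).
Hypothesis G_meas : forall n, measurable_fun setT (G n).
Hypothesis G_range : forall n x, 0 < G n x < 1.
Hypothesis G_ratio : forall n, exists c : R, forall x y, G n x / G n y <= c.

Let M1 m x : M m x setT = 1%E := prob_kernel x.

Lemma Q1_bounded_measurable m (f : S m.+1 -> R) :
  bounded_measurable f -> bounded_measurable (Q1 G M m f).
Proof.
move=> bf; have [mf [B fB]] := bf; split.
  by apply: measurable_funM => //; exact: measurable_mapp_kernel.
exists B => x; rewrite /Q1 normrM.
have /andP[G0 G1] := G_range m x.
have mB : `|mapp (M m x) f| <= B.
  by rewrite ler_norml mapp_bounds // => y; rewrite -ler_norml.
by rewrite -[B]mul1r; apply: ler_pM => //; rewrite ger0_norm ltW.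
Qed.

Lemma Q1_lin m (a c : R) (f h : S m.+1 -> R) :
  bounded_measurable f -> bounded_measurable h ->
  Q1 G M m (fun y => a * f y + c * h y) =
  (fun x => a * Q1 G M m f x + c * Q1 G M m h x).
Proof.
move=> bf bh; apply/funext => x; rewrite /Q1.
change (G m x * mapp (M m x) (fun y => a * f y + c * h y) =
  a * (G m x * mapp (M m x) f) + c * (G m x * mapp (M m x) h)).
rewrite mappD ?mappZ //; [ring | exact: bounded_measurableZ..].
Qed.

Lemma ler_Q1 m (f h : S m.+1 -> R) :
  bounded_measurable f -> bounded_measurable h -> (forall y, f y <= h y) ->
  forall x, Q1 G M m f x <= Q1 G M m h x.
Proof.
move=> bf bh fh x; apply: ler_wpM2l; last exact: ler_mapp.
by have /andP[/ltW] := G_range m x.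
Qed.

Lemma G_lower_bound m : exists e, 0 < e /\ forall x, e <= G m x.
Proof.
have [[y0 _]|S0] := pselect (exists y : S m, True); last first.
  by exists 1; split => // y; case: S0; exists y.
have [C GC] := G_ratio m.
have G0 x : 0 < G m x by have /andP[] := G_range m x.
have C0 : 0 < C by apply: lt_le_trans (GC y0 y0); exact: divr_gt0.
exists (G m y0 / C); split; first exact: divr_gt0.
by move=> x; rewrite ler_pdivrMr // mulrC -ler_pdivrMr.
Qed.

Section Qpn.
Variable p : nat.

Lemma Qpn_bounded_measurable k (f : S (k + p)%N -> R) :
  bounded_measurable f -> bounded_measurable (Qpn G M p k f).
Proof. by elim: k f => [|k IH] f bf //=; apply/IH/Q1_bounded_measurable. Qed.

Lemma Qpn_lin k (a c : R) (f h : S (k + p)%N -> R) :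
  bounded_measurable f -> bounded_measurable h ->
  Qpn G M p k (fun y => a * f y + c * h y) =
  (fun x => a * Qpn G M p k f x + c * Qpn G M p k h x).
Proof.
elim: k f h => [|k IH] f h bf bh //=.
by rewrite Q1_lin // IH //; exact: Q1_bounded_measurable.
Qed.

Lemma ler_Qpn k (f h : S (k + p)%N -> R) :
  bounded_measurable f -> bounded_measurable h -> (forall y, f y <= h y) ->
  forall x, Qpn G M p k f x <= Qpn G M p k h x.
Proof.
elim: k f h => [|k IH] f h bf bh fh //=.
by apply: IH; [exact: Q1_bounded_measurable.. | exact: ler_Q1].
Qed.

Lemma Qpn_cst k (c : R) x :
  Qpn G M p k (fun _ => c) x = c * Qpn G M p k (fun _ => 1) x.
Proof.
have -> : (fun _ : S (k + p)%N => c) = (fun _ => c * 1 + 0 * 1).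
  by apply/funext => y; ring.
by rewrite Qpn_lin ?mul0r ?addr0 //; exact: bounded_measurable_cst.
Qed.

Lemma Qpn_lower_bound k (f : S (k + p)%N -> R) (c : R) :
  bounded_measurable f -> 0 < c -> (forall y, c <= f y) ->
  exists e, 0 < e /\ forall x, e <= Qpn G M p k f x.
Proof.
elim: k f c => [|k IH] f c bf c0 cf /=; first by exists c.
have [e [e0 eG]] := G_lower_bound (k + p)%N.
apply: (IH _ (e * c)); [exact: Q1_bounded_measurable | exact: mulr_gt0 |].
move=> x; apply: ler_pM; [exact: ltW | exact: ltW | exact: eG |].
rewrite -[c](mapp_cst (M1 _ x)).
by apply: (ler_mapp (M1 _ x)) => //; exact: bounded_measurable_cst.
Qed.

Section fixed_horizon.
Variable k : nat.
Local Notation g := (Qpn G M p k (fun _ => 1)).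
Local Notation q := (qpn G M p k).
Local Notation b := (betaP G M p k).

Lemma Qpn1_lower_bound : exists e, 0 < e /\ forall x, e <= g x.
Proof.
by apply: Qpn_lower_bound ltr01 _ => //; exact: bounded_measurable_cst.
Qed.

Lemma Qpn1_gt0 x : 0 < g x.
Proof. by have [e [e0 eg]] := Qpn1_lower_bound; exact: lt_le_trans (eg x). Qed.

Lemma Ppn_mulQpn1 (f : S (k + p)%N -> R) x :
  Ppn G M p k f x * g x = Qpn G M p k f x.
Proof. by rewrite /Ppn divfK // gt_eqF // Qpn1_gt0. Qed.

Lemma Ppn_interval (f : S (k + p)%N -> R) (a : R) : bounded_measurable f ->
  (forall y, a <= f y <= a + 1) -> forall x, a <= Ppn G M p k f x <= a + 1.
Proof.
move=> bf fa x; rewrite /Ppn ler_pdivlMr ?ler_pdivrMr ?Qpn1_gt0 // -!Qpn_cst.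
by apply/andP; split; apply: ler_Qpn => //; try exact: bounded_measurable_cst;
  move=> y; have /andP[] := fa y.
Qed.

Lemma Ppn_oscillation_le1 (f : S (k + p)%N -> R) : Osc1 f ->
  forall x y, `|Ppn G M p k f x - Ppn G M p k f y| <= 1.
Proof.
move=> hf; have [a fa] := oscillation_le1_interval (proj2 hf).
exact/interval_oscillation_le1/Ppn_interval/fa/Osc1_bounded_measurable.
Qed.

Lemma Qpn1_ratio_le_qpn x y : g x / g y <= q.
Proof.
have [e [e0 eg]] := Qpn1_lower_bound.
have [_ [B gB]] := Qpn_bounded_measurable k _ (bounded_measurable_cst _ 1).
apply: ub_le_sup; last by exists x, y.
exists (B / e) => _ [x' [y' ->]].
rewrite ler_pdivrMr ?Qpn1_gt0 //; apply: le_trans (ler_norm _) _.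
apply: le_trans (gB x') _; have B0 : 0 <= B := le_trans (normr_ge0 _) (gB x').
rewrite -[X in X <= _](divfK (lt0r_neq0 e0)); apply: ler_wpM2l (eg y').
exact: divr_ge0 B0 (ltW e0).
Qed.

Lemma Qpn1_le_qpn x y : g x <= q * g y.
Proof. by rewrite -ler_pdivrMr ?Qpn1_gt0 //; exact: Qpn1_ratio_le_qpn. Qed.

Lemma Ppn_oscillation_le_betaP (f : S (k + p)%N -> R) : Osc1 f ->
  forall x y, `|Ppn G M p k f x - Ppn G M p k f y| <= b.
Proof.
move=> hf x y; apply: le_trans (le_osc (Ppn_oscillation_le1 f hf) x y) _.
apply: ub_le_sup; last by exists f.
exists 1 => _ [f' [hf' ->]]; exact: osc_le x (Ppn_oscillation_le1 _ hf').
Qed.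

Section probability_measures.
Variable mu : probability (S p) R.
Let mu1 : mu setT = 1%E := probability_setT mu.

Lemma mapp_Qpn1_gt0 : 0 < mapp mu g.
Proof.
have [e [e0 eg]] := Qpn1_lower_bound.
have bg := Qpn_bounded_measurable k _ (bounded_measurable_cst _ 1).
apply: lt_le_trans e0 _; rewrite -[e](mapp_cst mu1).
by apply: ler_mapp => //; exact: bounded_measurable_cst.
Qed.

Lemma Qpn1_le_qpn_mapp x : g x <= q * mapp mu g.
Proof.
have bg := Qpn_bounded_measurable k _ (bounded_measurable_cst _ 1).
rewrite -mappZ // -[g x](mapp_cst mu1).
by apply: ler_mapp => //;
  [exact: bounded_measurable_cst | exact: bounded_measurableZ | exact: Qpn1_le_qpn].
Qed.

Lemma mapp_Qpn1_le_qpn (nu : probability (S p) R) : mapp nu g <= q * mapp mu g.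
Proof.
have bg := Qpn_bounded_measurable k _ (bounded_measurable_cst _ 1).
rewrite -[q * _](mapp_cst (probability_setT nu)).
by apply: ler_mapp => //;
  [exact: probability_setT | exact: bounded_measurable_cst | exact: Qpn1_le_qpn_mapp].
Qed.

(* Phi mu f is a g-weighted mu-average of Ppn f. *)
Lemma Ppn_sub_Phi_le_betaP (f : S (k + p)%N -> R) : Osc1 f ->
  forall x, `|Ppn G M p k f x - Phi G M p k mu f| <= b.
Proof.
move=> hf x.
have bg := Qpn_bounded_measurable k _ (bounded_measurable_cst _ 1).
have bh := Qpn_bounded_measurable k _ (Osc1_bounded_measurable hf).
have hb y : (Ppn G M p k f x - b) * g y <= Qpn G M p k f y <=
            (Ppn G M p k f x + b) * g y.
  have := Ppn_oscillation_le_betaP f hf x y.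
  rewrite -(Ppn_mulQpn1 f y) ler_norml => /andP[? ?].
  by apply/andP; split; (apply: ler_wpM2r; [exact: ltW (Qpn1_gt0 y) | lra]).
have /andP[lo hi] : (Ppn G M p k f x - b) * mapp mu g <=
    mapp mu (Qpn G M p k f) <= (Ppn G M p k f x + b) * mapp mu g.
  by rewrite -!mappZ //; apply/andP; split; apply: ler_mapp => //;
    try exact: bounded_measurableZ; move=> y; have /andP[] := hb y.
rewrite -ler_pdivlMr ?mapp_Qpn1_gt0 // in lo.
rewrite -ler_pdivrMr ?mapp_Qpn1_gt0 // in hi.
by rewrite /Phi ler_norml; apply/andP; split; lra.
Qed.

End probability_measures.

Section first_order_expansion.
Variables (eta : probability (S p) R) (f : S (k + p)%N -> R).
Hypothesis hf : Osc1 f.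
Local Notation h := (Qpn G M p k f).
Local Notation c := (Phi G M p k eta f).

Definition Phi_influence : S p -> R :=
  fun x => (mapp eta g)^-1 * (h x - c * g x).

(* If beta = 0 then phi = 0, so the convention 0^-1 = 0 is harmless here. *)
Definition Upn : S p -> R := fun x => (2 * q * b)^-1 * Phi_influence x.

Definition Vpn : S p -> R := fun x => (q * mapp eta g)^-1 * g x.

Let bg := Qpn_bounded_measurable k _ (bounded_measurable_cst _ 1).
Let bh := Qpn_bounded_measurable k _ (Osc1_bounded_measurable hf).
Let eg0 : 0 < mapp eta g := mapp_Qpn1_gt0 eta.

Lemma qpn_ge1 : 1 <= q.
Proof.
have [x _] := probability_inhabited eta.
by have := Qpn1_ratio_le_qpn x x; rewrite divff // gt_eqF // Qpn1_gt0.
Qed.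

Lemma qpn_gt0 : 0 < q.
Proof. exact: lt_le_trans ltr01 qpn_ge1. Qed.

Lemma betaP_ge0 : 0 <= b.
Proof.
have [x _] := probability_inhabited eta.
by apply: le_trans (Ppn_oscillation_le_betaP f hf x x); exact: normr_ge0.
Qed.

Lemma bounded_measurable_Phi_influence : bounded_measurable Phi_influence.
Proof.
exact/bounded_measurableZ/bounded_measurableB/bounded_measurableZ.
Qed.

Lemma Phi_influenceE x :
  Phi_influence x = g x / mapp eta g * (Ppn G M p k f x - c).
Proof. by rewrite /Phi_influence -(Ppn_mulQpn1 f x); field; rewrite gt_eqF. Qed.

Lemma Phi_influence_norm_le x : `|Phi_influence x| <= q * b.
Proof.
have g_eg0 : 0 <= g x / mapp eta g by rewrite divr_ge0 // ltW ?Qpn1_gt0.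
rewrite Phi_influenceE normrM ger0_norm //; apply: ler_pM => //.
  by rewrite ler_pdivrMr //; exact: Qpn1_le_qpn_mapp.
exact: Ppn_sub_Phi_le_betaP.
Qed.

Lemma mapp_Phi_influence (mu : probability (S p) R) :
  mapp mu Phi_influence = (mapp mu h - c * mapp mu g) / mapp eta g.
Proof.
have bhc := bounded_measurableB bh (bounded_measurableZ c bg).
have mu1 := probability_setT mu.
rewrite /Phi_influence mappZ // mappB ?mappZ //; last exact: bounded_measurableZ.
by rewrite mulrC.
Qed.

Lemma mapp_eta_Phi_influence : mapp eta Phi_influence = 0.
Proof. by rewrite mapp_Phi_influence /Phi divfK ?subrr ?mul0r // gt_eqF. Qed.

Lemma Phi_first_order_expansion (mu : probability (S p) R) :
  Phi G M p k mu f - c - mapp mu Phi_influence =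
  - mapp mu Phi_influence * (mapp mu g - mapp eta g) / mapp mu g.
Proof.
rewrite mapp_Phi_influence.
by apply: ratio_first_order_expansion; rewrite gt_eqF ?mapp_Qpn1_gt0.
Qed.

Lemma bounded_measurable_Upn : bounded_measurable Upn.
Proof. exact/bounded_measurableZ/bounded_measurable_Phi_influence. Qed.

Lemma Upn_scale x : 2 * q * b * Upn x = Phi_influence x.
Proof.
have [b0|b0] := eqVneq b 0; last first.
  by rewrite /Upn mulrA divff ?mul1r // !mulf_neq0 // gt_eqF // qpn_gt0.
have := Phi_influence_norm_le x; rewrite b0 mulr0 normr_le0 => /eqP ->.
by rewrite mulr0 mul0r.
Qed.

Lemma Osc1_Upn : Osc1 Upn.
Proof.
split; first by case: bounded_measurable_Upn.
apply: (@interval_oscillation_le1 _ _ _ (- 2^-1)) => x.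
suff : `|Upn x| <= 2^-1 by rewrite ler_norml; lra.
have [b0|b0] := eqVneq b 0.
  by rewrite /Upn b0 mulr0 invr0 mul0r normr0 invr_ge0 ler0n.
have bpos : 0 < b by rewrite lt_neqAle eq_sym b0 betaP_ge0.
rewrite /Upn normrM ger0_norm; last first.
  by rewrite invr_ge0 !mulr_ge0 ?(ltW qpn_gt0) ?(ltW bpos).
rewrite mulrC ler_pdivrMr ?mulr_gt0 ?qpn_gt0 //.
have -> : 2^-1 * (2 * q * b) = q * b by rewrite !mulrA mulVf ?mul1r ?pnatr_eq0.
exact: Phi_influence_norm_le.
Qed.

Lemma bounded_measurable_Vpn : bounded_measurable Vpn.
Proof. exact: bounded_measurableZ. Qed.

Lemma Vpn_scale x : q * mapp eta g * Vpn x = g x.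
Proof.
by rewrite /Vpn mulrA divff ?mul1r // mulf_neq0 // gt_eqF // qpn_gt0.
Qed.

Lemma Osc1_Vpn : Osc1 Vpn.
Proof.
split; first by case: bounded_measurable_Vpn.
apply: (@interval_oscillation_le1 _ _ _ 0) => x; rewrite add0r.
have qeg0 : 0 < q * mapp eta g by rewrite mulr_gt0 // qpn_gt0.
rewrite /Vpn mulrC ler_pdivrMr // ler_pdivlMr // mul1r mul0r.
by rewrite ltW ?Qpn1_gt0 //=; exact: Qpn1_le_qpn_mapp.
Qed.

Lemma mapp_Upn (mu : probability (S p) R) :
  2 * q * b * mapp mu Upn = mapp mu Phi_influence.
Proof.
rewrite -mappZ; [| exact: probability_setT | exact: bounded_measurable_Upn].
by congr mapp; apply/funext => x; exact: Upn_scale.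
Qed.

Lemma mapp_Vpn (mu : probability (S p) R) :
  q * mapp eta g * mapp mu Vpn = mapp mu g.
Proof.
rewrite -mappZ; [| exact: probability_setT | exact: bounded_measurable_Vpn].
by congr mapp; apply/funext => x; exact: Vpn_scale.
Qed.

Lemma first_order_remainder_le (mu : probability (S p) R) :
  `|Phi G M p k mu f - c - 2 * q * b * (mapp mu Upn - mapp eta Upn)| <=
  4 * q ^+ 3 * b * `|mapp mu Vpn - mapp eta Vpn| * `|mapp mu Upn - mapp eta Upn|.
Proof.
set X := mapp mu Upn - mapp eta Upn; set Y := mapp mu Vpn - mapp eta Vpn.
have q_ge0 : 0 <= q := ltW qpn_gt0.
have mg0 : 0 < mapp mu g := mapp_Qpn1_gt0 mu.
have eX : 2 * q * b * X = mapp mu Phi_influence.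
  by rewrite mulrBr !mapp_Upn mapp_eta_Phi_influence subr0.
have eY : mapp mu g - mapp eta g = q * mapp eta g * Y by rewrite mulrBr !mapp_Vpn.
have ratio_le : mapp eta g / mapp mu g <= q.
  by rewrite ler_pdivrMr //; exact: mapp_Qpn1_le_qpn.
rewrite eX Phi_first_order_expansion -eX eY.
have -> : - (2 * q * b * X) * (q * mapp eta g * Y) / mapp mu g =
  - (2 * q ^+ 2 * b * X * Y) * (mapp eta g / mapp mu g) by ring.
rewrite normrM normrN [`|_ / _|]ger0_norm; last by rewrite divr_ge0 // ltW.
rewrite 4!normrM normr_nat normrX (ger0_norm q_ge0) (ger0_norm betaP_ge0).
have K0 : 0 <= 2 * q ^+ 2 * b * `|X| * `|Y|.
  by rewrite !mulr_ge0 ?exprn_ge0 ?betaP_ge0.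
apply: le_trans (ler_wpM2l K0 ratio_le) _.
have -> : 4 * q ^+ 3 * b * `|Y| * `|X| =
  2 * (2 * q ^+ 2 * b * `|X| * `|Y| * q) by ring.
have := mulr_ge0 K0 q_ge0; lra.
Qed.

End first_order_expansion.

End fixed_horizon.
End Qpn.
End feynman_kac_semigroup.

Arguments Upn {R d S} G M p k eta f.
Arguments Vpn {R d S} G M p k eta.

Theorem lemma4p3 (R : realType) (d : nat -> measure_display)
  (S : forall n, measurableType (d n))
  (M : forall n, R.-pker (S n) ~> (S n.+1))
  (G : forall n, S n -> R)
  (G_meas : forall n, measurable_fun setT (G n))
  (G_range : forall n x, 0 < G n x < 1)
  (G_ratio : forall n, exists c : R, forall x y, G n x / G n y <= c)
  (p k : nat) (eta : probability (S p) R)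
  (f : S (k + p)%N -> R) (hf : Osc1 f) :
  exists U V W : S p -> R, [/\ Osc1 U, Osc1 V, Osc1 W &
    forall mu : probability (S p) R,
      let q := qpn G M p k in
      let b := betaP G M p k in
      let Rem := Phi G M p k mu f - Phi G M p k eta f
                 - 2 * q * b * (mapp mu U - mapp eta U) in
      `|Rem| <= 4 * q ^+ 3 * b * `|mapp mu V - mapp eta V|
                                * `|mapp mu W - mapp eta W|].
Proof.
exists (Upn G M p k eta f), (Vpn G M p k eta), (Upn G M p k eta f).
split; [exact: Osc1_Upn | exact: Osc1_Vpn | exact: Osc1_Upn |].
by move=> mu /=; exact: first_order_remainder_le.
Qed.
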